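(* For real numbers $\epsilon_1,\epsilon_2\ge 0$ let \[ D_{\epsilon_1,\epsilon_2}=\begin{bmatrix}0&4&0\\2&0&4+\epsilon_1\\3&2+\epsilon_2&0\end{bmatrix}. \] There exists $\delta>0$ such that for all $\epsilon_1,\epsilon_2,\epsilon_1',\epsilon_2'\in[0,\delta]$, the bimatrix game $(D_{\epsilon_1,\epsilon_2},D_{\epsilon_1',\epsilon_2'}^T)$ has exactly one Nash equilibrium; this equilibrium has full support (both players assign positive probability to all three pure strategies); and if $(\epsilon_1,\epsilon_2)=(\epsilon_1',\epsilon_2')$ then this equilibrium is symmetric.
   Context: A bimatrix game $(A,B)$ with $m\times n$ real payoff matrices: the first player chooses a mixed strategy $\mathbf{x}\in\Delta_m=\{\mathbf{x}\in\mathbb{R}^m:\mathbf{x}\ge 0,\sum_i x_i=1\}$, the second $\mathbf{y}\in\Delta_n$; payoffs are $\mathbf{x}^TA\mathbf{y}$ and $\mathbf{x}^TB\mathbf{y}$. $(\mathbf{x},\mathbf{y})$ is a Nash equilibrium (NE) if neither player can increase her payoff by unilaterally changing her mixed strategy. A NE $(\mathbf{x},\mathbf{y})$ is symmetric if $\mathbf{x}=\mathbf{y}$. *)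

From Stdlib Require Import Reals Lra.
Open Scope R_scope.

(* A 3x3 real matrix: entry (i,j) for i,j in {0,1,2}; a mixed strategy is a
   vector x : nat -> R, meaningful on indices 0,1,2. *)
Definition mat3 := nat -> nat -> R.
Definition vec3 := nat -> R.

Definition sum3 (f : nat -> R) : R := f 0%nat + f 1%nat + f 2%nat.

Definition in_simplex (x : vec3) : Prop :=
  (forall i, (i < 3)%nat -> 0 <= x i) /\ sum3 x = 1.

Definition bilin (x : vec3) (A : mat3) (y : vec3) : R :=
  sum3 (fun i => sum3 (fun j => x i * A i j * y j)).

Definition transpose3 (A : mat3) : mat3 := fun i j => A j i.

Definition is_NE (A B : mat3) (x y : vec3) : Prop :=
  in_simplex x /\ in_simplex y /\
  (forall x', in_simplex x' -> bilin x' A y <= bilin x A y) /\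
  (forall y', in_simplex y' -> bilin x B y' <= bilin x B y).

(* Strategies are identified by their values on indices 0,1,2. *)
Definition eq3 (x x' : vec3) : Prop := forall i, (i < 3)%nat -> x i = x' i.

Definition full_support (x : vec3) : Prop := forall i, (i < 3)%nat -> 0 < x i.

Definition D (e1 e2 : R) : mat3 := fun i j =>
  match i, j with
  | O, S O => 4
  | S O, O => 2 | S O, S (S O) => 4 + e1
  | S (S O), O => 3 | S (S O), S O => 2 + e2
  | _, _ => 0
  end.

From Stdlib Require Import Reals Lra Lia.
Open Scope R_scope.

(* Against D_{e1,e2}, row i can only be a best response when the opponent
   plays column i+1 (mod 3) with positive probability: rows 0, 1, 2 need
   columns 1, 2, 0 respectively to earn anything competitive.  Both players
   face a matrix of this shape, so in an equilibrium a positive x_i forces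
   y_{i+1} > 0, which forces x_{i+2} > 0, and going twice around the cycle
   every strategy of both players is in the support.  A fully supported
   best response makes the opponent's strategy equalize the rows of D, and
   the equalizing strategy in the simplex is unique. *)

Definition row (A : mat3) (y : vec3) (i : nat) : R := sum3 (fun j => A i j * y j).

Definition pure (k : nat) : vec3 := fun j => if Nat.eqb j k then 1 else 0.

Definition best_response (A : mat3) (x y : vec3) : Prop :=
  in_simplex x /\ forall x', in_simplex x' -> bilin x' A y <= bilin x A y.

Lemma bilin_row A x y : bilin x A y = sum3 (fun i => x i * row A y i).
Proof. unfold bilin, row, sum3; ring. Qed.

Lemma bilin_transpose3 x B y : bilin x (transpose3 B) y = bilin y B x.
Proof. unfold bilin, transpose3, sum3; ring. Qed.

Lemma is_NE_transpose3 A B x y :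
  is_NE A (transpose3 B) x y <-> best_response A x y /\ best_response B y x.
Proof.
  unfold is_NE, best_response.
  split.
  - intros (Hx & Hy & HA & HB). split; split; auto.
    intros y' Hy'. rewrite <- (bilin_transpose3 x B y'), <- (bilin_transpose3 x B y). auto.
  - intros [[Hx HA] [Hy HB]]. do 3 (split; auto).
    intros y' Hy'. rewrite (bilin_transpose3 x B y'), (bilin_transpose3 x B y). auto.
Qed.

Lemma pure_simplex k : (k < 3)%nat -> in_simplex (pure k).
Proof.
  intro Hk. split.
  - intros i _. unfold pure. destruct (Nat.eqb i k); lra.
  - unfold sum3, pure. destruct k as [|[|[|k]]]; simpl; lra || lia.
Qed.

Lemma bilin_pure A y k : (k < 3)%nat -> bilin (pure k) A y = row A y k.
Proof.
  intro Hk. rewrite bilin_row. unfold sum3, pure.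
  destruct k as [|[|[|k]]]; simpl; ring || lia.
Qed.

Lemma sum3_nonneg_eq0 (f : nat -> R) :
  (forall j, (j < 3)%nat -> 0 <= f j) -> sum3 f = 0 ->
  forall j, (j < 3)%nat -> f j = 0.
Proof.
  unfold sum3. intros Hf Hs j Hj.
  pose proof (Hf 0%nat ltac:(lia)); pose proof (Hf 1%nat ltac:(lia));
  pose proof (Hf 2%nat ltac:(lia)).
  destruct j as [|[|[|j]]]; lra || lia.
Qed.

Lemma best_response_support A x y i k :
  best_response A x y -> (i < 3)%nat -> (k < 3)%nat -> 0 < x i ->
  row A y k <= row A y i.
Proof.
  intros [[Hx Hsum] Hbest] Hi Hk Hxi.
  set (v := bilin x A y).
  assert (Hpure : forall j, (j < 3)%nat -> row A y j <= v).
  { intros j Hj. rewrite <- bilin_pure by exact Hj. apply Hbest, pure_simplex, Hj. }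
  assert (Hslack : sum3 (fun j => x j * (v - row A y j)) = 0).
  { transitivity (v * sum3 x - bilin x A y).
    - rewrite bilin_row. unfold sum3. ring.
    - rewrite Hsum. unfold v. ring. }
  assert (Hxi0 : x i * (v - row A y i) = 0).
  { apply (sum3_nonneg_eq0 (fun j => x j * (v - row A y j))); auto.
    intros j Hj. apply Rmult_le_pos; [apply Hx, Hj|]. pose proof (Hpure j Hj); lra. }
  apply Rmult_integral in Hxi0 as [Hxi0 | Hvi]; [lra|].
  pose proof (Hpure k Hk). lra.
Qed.

Lemma best_response_constant_rows A x y c :
  in_simplex x -> (forall i, (i < 3)%nat -> row A y i = c) -> best_response A x y.
Proof.
  intros Hx Hrows. split; [exact Hx|].
  assert (Hval : forall z, bilin z A y = c * sum3 z).
  { intro z. rewrite bilin_row. unfold sum3.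
    rewrite !Hrows by lia. ring. }
  intros x' Hx'. rewrite !Hval. destruct Hx as [_ ->], Hx' as [_ ->]. lra.
Qed.

Lemma full_support_best_response_rows A x y i k :
  best_response A x y -> full_support x -> (i < 3)%nat -> (k < 3)%nat ->
  row A y i = row A y k.
Proof.
  intros Hbr Hfull Hi Hk.
  apply Rle_antisym; apply (best_response_support A x y); auto.
Qed.

Definition support_shift (x y : vec3) : Prop :=
  (0 < x 0%nat -> 0 < y 1%nat) /\ (0 < x 1%nat -> 0 < y 2%nat) /\
  (0 < x 2%nat -> 0 < y 0%nat).

Lemma full_support_of_support_shift x y :
  in_simplex x -> support_shift x y -> support_shift y x ->
  full_support x /\ full_support y.
Proof.
  intros [Hx Hsum] (xy0 & xy1 & xy2) (yx0 & yx1 & yx2).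
  unfold sum3 in Hsum.
  pose proof (Hx 0%nat ltac:(lia)); pose proof (Hx 1%nat ltac:(lia));
  pose proof (Hx 2%nat ltac:(lia)).
  assert (Hsome : 0 < x 0%nat \/ 0 < x 1%nat \/ 0 < x 2%nat) by lra.
  assert (Hall : 0 < x 0%nat /\ 0 < x 1%nat /\ 0 < x 2%nat) by intuition.
  split; intros [|[|[|i]]] Hi; intuition lia.
Qed.

Definition normalize (w : vec3) : vec3 := fun i => w i / sum3 w.

Lemma sum3_pos w : (forall i, (i < 3)%nat -> 0 < w i) -> 0 < sum3 w.
Proof.
  intro Hw. unfold sum3.
  pose proof (Hw 0%nat ltac:(lia)); pose proof (Hw 1%nat ltac:(lia));
  pose proof (Hw 2%nat ltac:(lia)). lra.
Qed.

Lemma normalize_full_support w :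
  (forall i, (i < 3)%nat -> 0 < w i) -> full_support (normalize w).
Proof.
  intros Hw i Hi. unfold normalize.
  apply Rdiv_lt_0_compat; [apply Hw, Hi | apply sum3_pos, Hw].
Qed.

Lemma normalize_simplex w :
  (forall i, (i < 3)%nat -> 0 < w i) -> in_simplex (normalize w).
Proof.
  intro Hw. pose proof (sum3_pos w Hw) as HS. split.
  - intros i Hi. apply Rlt_le, normalize_full_support; assumption.
  - unfold normalize, sum3 in *. field. lra.
Qed.

Lemma row_normalize A w i : row A (normalize w) i = row A w i / sum3 w.
Proof. unfold row, normalize, sum3 at 1 3; unfold Rdiv; ring. Qed.

Lemma normalize_of_proportional y w a b :
  sum3 y = 1 -> a <> 0 -> (forall i, (i < 3)%nat -> a * y i = b * w i) ->
  eq3 y (normalize w).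
Proof.
  intros Hsum Ha Hprop i Hi. unfold normalize.
  assert (Hab : a = b * sum3 w).
  { rewrite <- (Rmult_1_r a), <- Hsum. unfold sum3.
    rewrite Rmult_plus_distr_l, Rmult_plus_distr_l, !Hprop by lia. ring. }
  assert (b <> 0 /\ sum3 w <> 0) as [Hb HS].
  { split; intro E; apply Ha; rewrite Hab, E; ring. }
  apply (Rmult_eq_reg_l a); [|exact Ha].
  rewrite Hprop by exact Hi. rewrite Hab. field. exact HS.
Qed.

Section Game_D.

Variables e1 e2 : R.
Hypothesis He1 : 0 <= e1.
Hypothesis He2 : 0 <= e2 < 2.

Lemma D_best_response_support_shift x y :
  in_simplex y -> best_response (D e1 e2) x y -> support_shift x y.
Proof.
  intros [Hy Hsum] Hbr. unfold sum3 in Hsum.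
  pose proof (Hy 0%nat ltac:(lia)); pose proof (Hy 1%nat ltac:(lia));
  pose proof (Hy 2%nat ltac:(lia)).
  assert (Hcmp : forall i k, (i < 3)%nat -> (k < 3)%nat -> 0 < x i ->
            row (D e1 e2) y k <= row (D e1 e2) y i)
    by (intros; eapply best_response_support; eauto).
  unfold row, sum3, D in Hcmp; cbn in Hcmp.
  split; [|split]; intro Hxi; apply Rnot_le_lt; intro Hle.
  - pose proof (Hcmp 0%nat 1%nat ltac:(lia) ltac:(lia) Hxi).
    pose proof (Hcmp 0%nat 2%nat ltac:(lia) ltac:(lia) Hxi).
    assert (y 1%nat = 0) by lra. nra.
  - pose proof (Hcmp 1%nat 0%nat ltac:(lia) ltac:(lia) Hxi).
    pose proof (Hcmp 1%nat 2%nat ltac:(lia) ltac:(lia) Hxi).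
    assert (y 2%nat = 0) by lra. nra.
  - pose proof (Hcmp 2%nat 0%nat ltac:(lia) ltac:(lia) Hxi).
    pose proof (Hcmp 2%nat 1%nat ltac:(lia) ltac:(lia) Hxi).
    assert (y 0%nat = 0) by lra. assert (y 1%nat = 0) by nra. nra.
Qed.

(* The solution, up to scale, of 4 w1 = 2 w0 + (4+e1) w2 = 3 w0 + (2+e2) w1. *)
Definition equalizer_weights : vec3 := fun i =>
  match i with
  | O => (2 - e2) * (4 + e1)
  | S O => 3 * (4 + e1)
  | _ => 8 + 2 * e2
  end.

Definition equalizer : vec3 := normalize equalizer_weights.

Lemma equalizer_weights_pos i : (i < 3)%nat -> 0 < equalizer_weights i.
Proof.
  intro Hi. destruct i as [|[|[|i]]]; cbn; try lia; try nra.
Qed.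

Lemma row_D_equalizer_weights i :
  (i < 3)%nat -> row (D e1 e2) equalizer_weights i = 12 * (4 + e1).
Proof. intro Hi. destruct i as [|[|[|i]]]; try lia; unfold row, sum3; cbn; ring. Qed.

Lemma equalizer_simplex : in_simplex equalizer.
Proof. apply normalize_simplex, equalizer_weights_pos. Qed.

Lemma equalizer_full_support : full_support equalizer.
Proof. apply normalize_full_support, equalizer_weights_pos. Qed.

Lemma D_best_response_equalizer x : in_simplex x -> best_response (D e1 e2) x equalizer.
Proof.
  intro Hx. apply best_response_constant_rows with (12 * (4 + e1) / sum3 equalizer_weights).
  - exact Hx.
  - intros i Hi. unfold equalizer. rewrite row_normalize, row_D_equalizer_weights; auto.
Qed.

Lemma D_equal_rows_equalizer y :
  in_simplex y ->
  (forall i k, (i < 3)%nat -> (k < 3)%nat -> row (D e1 e2) y i = row (D e1 e2) y k) ->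
  eq3 y equalizer.
Proof.
  intros [_ Hsum] Hrows.
  pose proof (Hrows 0%nat 1%nat ltac:(lia) ltac:(lia)) as R01.
  pose proof (Hrows 0%nat 2%nat ltac:(lia) ltac:(lia)) as R02.
  unfold row, sum3, D in R01, R02; cbn in R01, R02.
  apply (normalize_of_proportional y equalizer_weights (3 * (4 + e1)) (y 1%nat));
    [exact Hsum | lra |].
  intros [|[|[|i]]] Hi; cbn; try lia; nra.
Qed.

End Game_D.

Lemma D_equilibrium_equalizers e1 e2 e1' e2' x y :
  0 <= e1 -> 0 <= e2 < 2 -> 0 <= e1' -> 0 <= e2' < 2 ->
  best_response (D e1 e2) x y -> best_response (D e1' e2') y x ->
  eq3 x (equalizer e1' e2') /\ eq3 y (equalizer e1 e2).
Proof.
  intros He1 He2 He1' He2' Hx Hy.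
  destruct (full_support_of_support_shift x y) as [Fx Fy].
  - apply Hx.
  - apply (D_best_response_support_shift e1 e2); [exact He1 | exact He2 | apply Hy | exact Hx].
  - apply (D_best_response_support_shift e1' e2'); [exact He1' | exact He2' | apply Hx | exact Hy].
  - split.
    + apply (D_equal_rows_equalizer e1' e2'); [exact He1' | apply Hx |].
      intros; eapply full_support_best_response_rows; eauto.
    + apply (D_equal_rows_equalizer e1 e2); [exact He1 | apply Hy |].
      intros; eapply full_support_best_response_rows; eauto.
Qed.

Theorem lemma3p2 :
  exists delta : R, 0 < delta /\
  forall e1 e2 e1' e2' : R,
    0 <= e1 <= delta -> 0 <= e2 <= delta ->
    0 <= e1' <= delta -> 0 <= e2' <= delta ->
    let A := D e1 e2 in
    let B := transpose3 (D e1' e2') in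
    exists x y : vec3,
      is_NE A B x y /\
      (forall x' y', is_NE A B x' y' -> eq3 x' x /\ eq3 y' y) /\
      full_support x /\ full_support y /\
      ((e1 = e1' /\ e2 = e2') -> eq3 x y).
Proof.
  exists 1. split; [lra|].
  intros e1 e2 e1' e2' Hb1 Hb2 Hb1' Hb2' A B.
  assert (0 <= e1 /\ 0 <= e2 < 2 /\ 0 <= e1' /\ 0 <= e2' < 2)
    as (He1 & He2 & He1' & He2') by lra.
  exists (equalizer e1' e2'), (equalizer e1 e2).
  split; [|split; [|split; [|split]]].
  - apply is_NE_transpose3.
    split; apply D_best_response_equalizer, equalizer_simplex; assumption.
  - intros x y HNE. apply is_NE_transpose3 in HNE as [Hx Hy].
    apply D_equilibrium_equalizers; assumption.
  - apply equalizer_full_support; assumption.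
  - apply equalizer_full_support; assumption.
  - intros [-> ->] i _. reflexivity.
Qed.
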